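(* For every DML query $Q$, the rewriting system $\mathcal{R}^{\mathrm{dml}}_{\Sigma,\mathcal{D}}(Q)$ is terminating (it admits no infinite sequence of one-step rewrites).
   Context: Setting. Order-sorted signature $\Sigma$ with sorts $\mathsf{Fact}$, $\mathsf{Bool}$ interpreted in an algebra $\mathcal{D}$ presented by structural axioms $A$ and confluent terminating equations with Boolean connectives and Boolean-valued equality; ground $\mathsf{Bool}$ terms reduce to $\mathsf{true}$/$\mathsf{false}$. Multisets of facts: associative commutative $\circ$ with identity $\emptyset$. Nominal sorts $s$ have values $\iota^s_n$ ($n\in\mathbb{N}$); for each nominal sort a fresh-fact constructor $C_s$; multisets of fresh facts are built analogously; $\upsilon(C_{s_1}(\iota^{s_1}_{m_1})\circ\cdots\circ C_{s_n}(\iota^{s_n}_{m_n}))=C_{s_1}(\iota^{s_1}_{m_1+1})\circ\cdots\circ C_{s_n}(\iota^{s_n}_{m_n+1})$. Patterns: $\circ$-combinations of groups $[F]_!$ (keep), $[F]_?$ (retain), $[F]_0$ (delete) with $F$ non-empty multisets of (possibly non-ground) facts, and $[G]_\star$ with $G$ a non-empty multiset of fresh facts (possibly with variables); $P_!,P_?,P_0,P_\star$ denote the respective wrapped multisets (empty if absent). $P$ is terminating if $P_?\neq\emptyset$, semi-terminating if $P_?\circ P_0\neq\emptyset$, terminating and preserving if $P_?\neq\emptyset$ and $P_0=P_\star=\emptyset$. Conditions: $\mathrm{False}$, $\{B\}$, $\neg\psi$, $\psi_1\vee\psi_2$, $\exists P.\psi$ ($P$ terminating and preserving). Condition-evaluation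 stacks and rules (''$X\mapsto Y$'' meaning $\{F,S\,X\}^c\to\{F,S\,Y\}^c$, $F$ the current database, $\sigma=\{\vec a/\vec v\}$): $[\vec a]_{\mathrm{False}}\mapsto\mathrm{Res}(\mathsf{false})$; $[\vec a]_{\{B\}}\mapsto\mathrm{Res}(\sigma(B))$; $[\vec a]_{\neg\psi}\mapsto\mathrm{Not}[\vec a]_\psi$; $\mathrm{Not}\,\mathrm{Res}(B)\mapsto\mathrm{Res}(\neg B)$; $[\vec a]_{\psi_1\vee\psi_2}\mapsto[\vec a]^\downarrow_{\psi_1}[\vec a]_{\psi_2}$; $[\vec a]^\downarrow_\psi\mathrm{Res}(\mathsf{true})\mapsto\mathrm{Res}(\mathsf{true})$; $[\vec a]^\downarrow_\psi\mathrm{Res}(\mathsf{false})\mapsto[\vec a]_\psi$; $[\vec a]_{\exists P.\psi}\mapsto[F\mid\vec a]_{\exists P.\psi}$; if $\vec w$ lists the variables of $P$ not in $\vec v$, $\sigma'=\{\vec a/\vec v,\vec b/\vec w\}$, $F'=F''\circ\sigma'(P_!\circ P_?)$: $[F'\mid\vec a]_{\exists P.\psi}\mapsto[F''\circ\sigma'(P_!)\mid\vec a]_{\exists P.\psi}[\vec a,\vec b]^{\vec v,\vec w}_\psi$; $[F'\mid\vec a]_{\exists P.\psi}\mathrm{Res}(\mathsf{false})\mapsto[F'\mid\vec a]_{\exists P.\psi}$; $[F'\mid\vec a]_{\exists P.\psi}\mathrm{Res}(\mathsf{true})\mapsto\mathrm{Res}(\mathsf{true})$; if no matching exists, $[F'\mid\vec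 a]_{\exists P.\psi}\mapsto\mathrm{Res}(\mathsf{false})$. DML queries: $\emptyset$, $\mathrm{ok}$, facts $f$, $D\oplus D'$, $\varphi\Rightarrow D$, $\mathrm{From}\,P.D$ with $P$ terminating, and $\mathrm{From}\,P.D$ with $P$ semi-terminating and $D$ success assured (success-assured: $\mathrm{ok}$, a fact, or $D_1\oplus D_2$ with $D_1$ or $D_2$ success assured). Quantifiers bind the variables of $P$ not bound by the context. $\mathcal{R}^{\mathrm{dml}}_{\Sigma,\mathcal{D}}(Q)$: states $\{F,F',F_\star,S\}^d$ ($F$ current database, $F'$ facts to be added, $F_\star$ fresh facts, $S$ stack, top at right), terminal $\mathrm{New}(G,G_\star)$ and $\mathrm{Fail}(G,G_\star)$. Frames, for subqueries $R$ of $Q$: $\mathrm{Ok}$; $[\vec a]^{\vec v}_R$; $[\vec a]^{\vec v,\downarrow}_R$; $[\vec a\mid S']^{\vec v}_R$ ($S'$ a condition stack); iterator frames $[H\mid\vec a\mid B]^{\vec v}_{\mathrm{From}\,P.R}$ and tentative frames $[H\mid\vec a\mid B,F_0]^{\vec v}_{\mathrm{From}\,P.R}$ ($B$ Boolean). With ''$X\mapsto Y$'' meaning $\{F,F',F_\star,S\,X\}^d\to\{F,F',F_\star,S\,Y\}^d$: $\mathrm{Ok}\,\mathrm{Ok}\mapsto\mathrm{Ok}$; $[\vec a]_{\mathrm{ok}}\mapsto\mathrm{Ok}$; $[\vec a]_\emptyset\mapsto$ (nothing); $\{F,F',F_\star,S[\vec a]_f\}^d\to\{F,F'\circ\sigma(f),F_\star,S\,\mathrm{Ok}\}^d$;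 $[\vec a]_{R_1\oplus R_2}\mapsto[\vec a]^\downarrow_{R_2}[\vec a]_{R_1}$; $[\vec a]^\downarrow_{R_2}\mathrm{Ok}\mapsto\mathrm{Ok}[\vec a]_{R_2}$; $[\vec a]^\downarrow_{R_2}\mapsto[\vec a]_{R_2}$ (when it is the top frame); $[\vec a]_{\varphi\Rightarrow R}\mapsto[\vec a\mid[\vec a]^{\vec v}_\varphi]_R$; $[\vec a\mid\mathrm{Res}(\mathsf{false})]_R\mapsto$ (nothing); $[\vec a\mid\mathrm{Res}(\mathsf{true})]_R\mapsto[\vec a]_R$; for each condition rule $\{F,S'\}^c\to\{F,S''\}^c$, $[\vec a\mid S']_R\mapsto[\vec a\mid S'']_R$; $[\vec a]_{\mathrm{From}\,P.R}\mapsto[F\mid\vec a\mid\mathsf{false}]_{\mathrm{From}\,P.R}$; if $\vec w$ lists the variables of $P$ not in $\vec v$, $\sigma'=\{\vec a/\vec v,\vec b/\vec w\}$, $F=G\circ\sigma'(P_!\circ P_?\circ P_0)$, $H=H'\circ\sigma'(P_!\circ P_?\circ P_0)$ and $F_\star=K\circ\sigma'(P_\star)$, then $\{F,F',F_\star,S[H\mid\vec a\mid B]_{\mathrm{From}\,P.R}\}^d\to\{G\circ\sigma'(P_!\circ P_?),F',K\circ\upsilon(\sigma'(P_\star)),S[H'\circ\sigma'(P_!)\mid\vec a\mid B,\sigma'(P_0)]_{\mathrm{From}\,P.R}[\vec a,\vec b]^{\vec v,\vec w}_R\}^d$; $\{F,F',F_\star,S[H\mid\vec a\mid B,F_0]_{\mathrm{From}\,P.R}\}^d\to\{F\circ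 F_0,F',F_\star,S[H\circ F_0\mid\vec a\mid B]_{\mathrm{From}\,P.R}\}^d$; $[H\mid\vec a\mid B,F_0]_{\mathrm{From}\,P.R}\mathrm{Ok}\mapsto[H\mid\vec a\mid\mathsf{true}]_{\mathrm{From}\,P.R}$; if $H$ does not match $H'\circ\sigma'(P_!\circ P_?\circ P_0)$ for any $H',\vec b$, then $[H\mid\vec a\mid B]_{\mathrm{From}\,P.R}\mapsto\delta(B)$ with $\delta(\mathsf{true})=\mathrm{Ok}$, $\delta(\mathsf{false})=$ nothing; $\{F,F',F_\star,\mathrm{Ok}\}^d\to\mathrm{New}(F\circ F',F_\star)$; $\{F,F',F_\star,\text{empty}\}^d\to\mathrm{Fail}(F\circ F',F_\star)$. *)

From mathcomp Require Import all_boot.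
Set Implicit Arguments. Unset Strict Implicit. Unset Printing Implicit Defensive.

(* The data algebra D, abstracted through its interface.                     *)
Record DMLsig := {
  Var   : eqType;
  Val   : Type;
  wt    : Var -> Val -> bool;              (* value admissible for the sort of
                                              the variable                    *)
  Fact  : eqType;                          (* elements of sort Fact of D
                                              (equality = equality in D)      *)
  FTerm : Type;                            (* possibly non-ground Fact terms   *)
  finst : (Var -> Val) -> FTerm -> Fact;   (* sigma(f), normalised             *)
  fvars : FTerm -> seq Var;
  BTerm : Type;
  binst : (Var -> Val) -> BTerm -> bool;
  NSort : eqType;
  iota  : NSort -> nat -> Val
}.

Section DML.
Variable Sg : DMLsig.
Local Notation V := (Var Sg).
Local Notation Vl := (Val Sg).
Local Notation Fct := (Fact Sg).
Local Notation FT := (FTerm Sg).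
Local Notation BT := (BTerm Sg).
Local Notation NS := (NSort Sg).

(* fresh facts C_s(iota^s_n) are represented by (s, n) *)
Definition freshfact := (NS * nat)%type.

(* a fresh-fact pattern entry C_s(t), t a variable or a constant iota^s_n *)
Definition fpent := (NS * (V + nat))%type.

(* A pattern: P_!, P_?, P_0 (multisets of fact terms) and P_star. *)
Record pat := Pat {
  pkeep : seq FT;
  pret  : seq FT;
  pdel  : seq FT;
  pfresh : seq fpent
}.

Definition nvar (t : V + nat) : seq V := if t is inl x then [:: x] else [::].

Definition pvars (P : pat) : seq V :=
  flatten (map (@fvars Sg) (pkeep P ++ pret P ++ pdel P))
  ++ flatten (map (fun e : fpent => nvar e.2) (pfresh P)).

Definition terminating (P : pat) : bool := ~~ nilp (pret P).
Definition semi_terminating (P : pat) : bool := ~~ nilp (pret P ++ pdel P).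
Definition preserving (P : pat) : bool := nilp (pdel P) && nilp (pfresh P).

Inductive cond :=
| CFalse
| CBool of BT
| CNot of cond
| COr of cond & cond
| CEx of pat & cond.

Inductive query :=
| QEmpty
| QOk
| QFact of FT
| QPlus of query & query
| QImp of cond & query
| QFrom of pat & query.

Fixpoint success_assured (D : query) : bool :=
  match D with
  | QOk => true
  | QFact _ => true
  | QPlus D1 D2 => success_assured D1 || success_assured D2
  | _ => false
  end.

Fixpoint wf_cond (c : cond) : Prop :=
  match c with
  | CNot c => wf_cond c
  | COr c1 c2 => wf_cond c1 /\ wf_cond c2
  | CEx P c => terminating P /\ preserving P /\ wf_cond c
  | _ => True
  end.

Fixpoint dml_query (D : query) : Prop :=
  match D with
  | QPlus D1 D2 => dml_query D1 /\ dml_query D2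
  | QImp c D => wf_cond c /\ dml_query D
  | QFrom P D =>
      (terminating P \/ (semi_terminating P /\ success_assured D)) /\ dml_query D
  | _ => True
  end.

Fixpoint subq (R D : query) : Prop :=
  R = D \/
  match D with
  | QPlus D1 D2 => subq R D1 \/ subq R D2
  | QImp _ D => subq R D
  | QFrom _ D => subq R D
  | _ => False
  end.

Fixpoint subc_c (c d : cond) : Prop :=
  c = d \/
  match d with
  | CNot d => subc_c c d
  | COr d1 d2 => subc_c c d1 \/ subc_c c d2
  | CEx _ d => subc_c c d
  | _ => False
  end.

Fixpoint subc (c : cond) (D : query) : Prop :=
  match D with
  | QPlus D1 D2 => subc c D1 \/ subc c D2
  | QImp d D => subc_c c d \/ subc c D
  | QFrom _ D => subc c D
  | _ => False
  end.

(* substitutions: a frame [a]^v stores the bound variables vs = v and a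
   valuation s with a = map s vs *)
Definition inst (s : V -> Vl) (ts : seq FT) : seq Fct := map (finst s) ts.

Definition ext_vars (vs : seq V) (P : pat) : seq V :=
  undup [seq x <- pvars P | x \notin vs].

Definition ext_env (vs : seq V) (s : V -> Vl) (P : pat) (b : V -> Vl) : V -> Vl :=
  fun x => if x \in ext_vars vs P then b x else s x.

Definition wt_on (w : seq V) (b : V -> Vl) : Prop :=
  forall x, x \in w -> wt x (b x).

(* L = sigma'(P_star) as a multiset of fresh facts *)
Definition fresh_inst (s : V -> Vl) (e : fpent) (g : freshfact) : Prop :=
  g.1 = e.1 /\ match e.2 with
               | inl x => s x = iota e.1 g.2
               | inr n => g.2 = n
               end.

Fixpoint fresh_match (s : V -> Vl) (G : seq fpent) (L : seq freshfact) : Prop :=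
  match G, L with
  | [::], [::] => True
  | e :: G, g :: L => fresh_inst s e g /\ fresh_match s G L
  | _, _ => False
  end.

Definition upsilon (L : seq freshfact) : seq freshfact :=
  [seq (g.1, g.2.+1) | g <- L].

(* Condition evaluation (stacks: top of stack = last element of the seq)     *)
Inductive cframe :=
| CEval of seq V & (V -> Vl) & cond
| CRes of bool
| CNotF
| CDown of seq V & (V -> Vl) & cond
| CExF of seq Fct & seq V & (V -> Vl) & pat & cond.

Inductive clocal (F : seq Fct) : seq cframe -> seq cframe -> Prop :=
| CL_false vs s :
    clocal F [:: CEval vs s CFalse] [:: CRes false]
| CL_bool vs s B :
    clocal F [:: CEval vs s (CBool B)] [:: CRes (binst s B)]
| CL_not vs s c :
    clocal F [:: CEval vs s (CNot c)] [:: CNotF; CEval vs s c]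
| CL_notres b :
    clocal F [:: CNotF; CRes b] [:: CRes (~~ b)]
| CL_or vs s c1 c2 :
    clocal F [:: CEval vs s (COr c1 c2)] [:: CDown vs s c1; CEval vs s c2]
| CL_downT vs s c :
    clocal F [:: CDown vs s c; CRes true] [:: CRes true]
| CL_downF vs s c :
    clocal F [:: CDown vs s c; CRes false] [:: CEval vs s c]
| CL_ex vs s P c :
    clocal F [:: CEval vs s (CEx P c)] [:: CExF F vs s P c]
| CL_exmatch H H'' vs s P c b :
    wt_on (ext_vars vs P) b ->
    perm_eq H (H'' ++ inst (ext_env vs s P b) (pkeep P ++ pret P)) ->
    clocal F [:: CExF H vs s P c]
             [:: CExF (H'' ++ inst (ext_env vs s P b) (pkeep P)) vs s P c;
                 CEval (vs ++ ext_vars vs P) (ext_env vs s P b) c]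
| CL_exF H vs s P c :
    clocal F [:: CExF H vs s P c; CRes false] [:: CExF H vs s P c]
| CL_exT H vs s P c :
    clocal F [:: CExF H vs s P c; CRes true] [:: CRes true]
| CL_exnone H vs s P c :
    (forall b H'', wt_on (ext_vars vs P) b ->
        ~ perm_eq H (H'' ++ inst (ext_env vs s P b) (pkeep P ++ pret P))) ->
    clocal F [:: CExF H vs s P c] [:: CRes false].

Definition cstep (F : seq Fct) (S1 S2 : seq cframe) : Prop :=
  exists S X Y, clocal F X Y /\ S1 = S ++ X /\ S2 = S ++ Y.

Inductive dframe :=
| DOk
| DEval of seq V & (V -> Vl) & query
| DDown of seq V & (V -> Vl) & query
| DCond of seq V & (V -> Vl) & seq cframe & query
| DIter of seq Fct & seq V & (V -> Vl) & bool & pat & query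
      (* [H|a|B]^v_{From P.R}   (label From P.R stored as P and R) *)
| DTent of seq Fct & seq V & (V -> Vl) & bool & seq Fct & pat & query.

Inductive dstate :=
| DState of seq Fct & seq Fct & seq freshfact & seq dframe
| DNew of seq Fct & seq freshfact
| DFail of seq Fct & seq freshfact.

Inductive dlocal (F : seq Fct) : seq dframe -> seq dframe -> Prop :=
| DL_okok : dlocal F [:: DOk; DOk] [:: DOk]
| DL_ok vs s : dlocal F [:: DEval vs s QOk] [:: DOk]
| DL_empty vs s : dlocal F [:: DEval vs s QEmpty] [::]
| DL_plus vs s R1 R2 :
    dlocal F [:: DEval vs s (QPlus R1 R2)] [:: DDown vs s R2; DEval vs s R1]
| DL_downok vs s R : dlocal F [:: DDown vs s R; DOk] [:: DOk; DEval vs s R]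
| DL_down vs s R : dlocal F [:: DDown vs s R] [:: DEval vs s R]
| DL_imp vs s c R :
    dlocal F [:: DEval vs s (QImp c R)] [:: DCond vs s [:: CEval vs s c] R]
| DL_condF vs s R : dlocal F [:: DCond vs s [:: CRes false] R] [::]
| DL_condT vs s R : dlocal F [:: DCond vs s [:: CRes true] R] [:: DEval vs s R]
| DL_cond vs s S1 S2 R :
    cstep F S1 S2 -> dlocal F [:: DCond vs s S1 R] [:: DCond vs s S2 R]
| DL_from vs s P R :
    dlocal F [:: DEval vs s (QFrom P R)] [:: DIter F vs s false P R]
| DL_tentok H vs s B F0 P R :
    dlocal F [:: DTent H vs s B F0 P R; DOk] [:: DIter H vs s true P R]
| DL_nomatch H vs s B P R :
    (forall b H', wt_on (ext_vars vs P) b ->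
        ~ perm_eq H (H' ++ inst (ext_env vs s P b) (pkeep P ++ pret P ++ pdel P))) ->
    dlocal F [:: DIter H vs s B P R] (if B then [:: DOk] else [::]).

Inductive dstep : dstate -> dstate -> Prop :=
| DS_local F F' Fs S X Y :
    dlocal F X Y -> dstep (DState F F' Fs (S ++ X)) (DState F F' Fs (S ++ Y))
| DS_fact F F' Fs S vs s f :
    dstep (DState F F' Fs (S ++ [:: DEval vs s (QFact f)]))
          (DState F (F' ++ [:: finst s f]) Fs (S ++ [:: DOk]))
| DS_iter F F' Fs S H vs s B P R b G H' K L :
    wt_on (ext_vars vs P) b ->
    perm_eq F (G ++ inst (ext_env vs s P b) (pkeep P ++ pret P ++ pdel P)) ->
    perm_eq H (H' ++ inst (ext_env vs s P b) (pkeep P ++ pret P ++ pdel P)) ->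
    fresh_match (ext_env vs s P b) (pfresh P) L ->
    perm_eq Fs (K ++ L) ->
    dstep (DState F F' Fs (S ++ [:: DIter H vs s B P R]))
          (DState (G ++ inst (ext_env vs s P b) (pkeep P ++ pret P)) F'
                  (K ++ upsilon L)
                  (S ++ [:: DTent (H' ++ inst (ext_env vs s P b) (pkeep P)) vs s B
                                  (inst (ext_env vs s P b) (pdel P)) P R;
                           DEval (vs ++ ext_vars vs P) (ext_env vs s P b) R]))
| DS_tent F F' Fs S H vs s B F0 P R :
    dstep (DState F F' Fs (S ++ [:: DTent H vs s B F0 P R]))
          (DState (F ++ F0) F' Fs (S ++ [:: DIter (H ++ F0) vs s B P R]))
| DS_new F F' Fs : dstep (DState F F' Fs [:: DOk]) (DNew (F ++ F') Fs)
| DS_fail F F' Fs : dstep (DState F F' Fs [::]) (DFail (F ++ F') Fs).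

(* states of R^dml(Q): all frames are for subqueries / subconditions of Q *)
Definition cframe_ok (Q : query) (f : cframe) : Prop :=
  match f with
  | CEval _ _ c | CDown _ _ c => subc c Q
  | CExF _ _ _ P c => subc (CEx P c) Q
  | _ => True
  end.

Definition dframe_ok (Q : query) (f : dframe) : Prop :=
  match f with
  | DOk => True
  | DEval _ _ R | DDown _ _ R => subq R Q
  | DCond _ _ Sc R => subq R Q /\ foldr (fun c P => cframe_ok Q c /\ P) True Sc
  | DIter _ _ _ _ P R => subq (QFrom P R) Q
  | DTent _ _ _ _ _ P R => subq (QFrom P R) Q
  end.

Definition valid_dstate (Q : query) (st : dstate) : Prop :=
  match st with
  | DState _ _ _ St => foldr (fun f P => dframe_ok Q f /\ P) True St
  | _ => True
  end.

End DML.

From mathcomp Require Import all_boot.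
From mathcomp Require Import zify.

Set Implicit Arguments.
Unset Strict Implicit.
Unset Printing Implicit Defensive.

(* The size of the database plus the number of facts held back in tentative
   frames never grows, so it bounds the database once and for all by some M.
   With M fixed, every frame gets a weight: an iterator whose copy of the
   database has k facts costs (k + 1) times its body, and a [From] or [Exists]
   frame that has not started yet costs M + 1 times its body.  A match removes
   its retained and deleted facts from the copy (the deleted ones come back
   only if the body fails), and for the patterns allowed in DML queries this
   makes the copy shrink, so every rewrite step lowers the weight of the stack
   and no infinite run exists. *)

Lemma foldr_and_catr (T : Type) (p : T -> Prop) (s1 s2 : seq T) :
  foldr (fun x acc => p x /\ acc) True (s1 ++ s2) ->
  foldr (fun x acc => p x /\ acc) True s2.
Proof. by elim: s1 => //= x s IH [_ /IH]. Qed.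

Section Termination.
Variable Sg : DMLsig.
Implicit Types (Q R : query Sg) (c d : cond Sg) (P : pat Sg).

Lemma subq_From_wf Q P R : dml_query Q -> subq (QFrom P R) Q ->
  terminating P \/ (semi_terminating P /\ success_assured R).
Proof.
elim: Q => [||f|Q1 IH1 Q2 IH2|c Q IH|P0 Q IH] /=; try by move=> _ [].
- by case=> h1 h2 [//|[]]; [exact: IH1|exact: IH2].
- by case=> _ h [//|]; exact: IH.
- by case=> h1 h2 [[-> ->] //|]; exact: IH.
Qed.

Lemma subc_c_wf c d : subc_c c d -> wf_cond d -> wf_cond c.
Proof.
elim: d => [|B|d IH|d1 IH1 d2 IH2|P d IH] /=; case=> [-> //|] //.
- by case=> h [h1 h2]; [exact: IH1|exact: IH2].
- by move=> h [_ [_ hd]]; exact: IH.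
Qed.

Lemma subc_wf c Q : subc c Q -> dml_query Q -> wf_cond c.
Proof.
elim: Q => [||f|Q1 IH1 Q2 IH2|d Q IH|P Q IH] //=.
- by case=> h [h1 h2]; [exact: IH1|exact: IH2].
- by case=> h [hd hQ]; [exact: subc_c_wf h hd|exact: IH].
- by move=> h [_ hQ]; exact: IH.
Qed.

Definition cframe_terminating (x : cframe Sg) : bool :=
  if x is CExF _ _ _ P _ then terminating P else true.

Lemma cframes_ok_terminating Q (S : seq (cframe Sg)) : dml_query Q ->
  foldr (fun x acc => cframe_ok Q x /\ acc) True S -> all cframe_terminating S.
Proof.
move=> hQ; elim: S => //= x S IH [hx /IH ->]; rewrite andbT.
by case: x hx => //= _ _ _ P c /subc_wf/(_ hQ) [->].
Qed.

Definition tent_size (x : dframe Sg) : nat :=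
  if x is DTent _ _ _ _ F0 _ _ then size F0 else 0.

Definition pending_size (S : seq (dframe Sg)) : nat := sumn (map tent_size S).

Definition mass (st : dstate Sg) : nat :=
  if st is DState F _ _ St then size F + pending_size St else 0.

Lemma pending_size_cat S1 S2 :
  pending_size (S1 ++ S2) = pending_size S1 + pending_size S2.
Proof. by rewrite /pending_size map_cat sumn_cat. Qed.

Lemma dlocal_pending_size F X Y :
  dlocal F X Y -> pending_size Y <= pending_size X.
Proof. by case=> //= *; rewrite /pending_size /=; case: ifP. Qed.

Lemma dstep_mass st st' : dstep st st' -> mass st' <= mass st.
Proof.
case=> //= [F F' Fs S X Y /dlocal_pending_size|F F' Fs S vs s f|
            F F' Fs S H vs s B P R b G H' K L _ hF _ _ _|F F' Fs S H vs s B F0 P R].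
- by rewrite !pending_size_cat; lia.
- by rewrite !pending_size_cat.
- rewrite (perm_size hF) !pending_size_cat /pending_size /= /inst.
  by rewrite !size_cat !map_cat !size_cat; lia.
- by rewrite !pending_size_cat /pending_size /= size_cat; lia.
Qed.

Section Potential.
Variable M : nat.

Definition loop_weight (k w : nat) : nat := k.+1 * (w + 2).

Lemma loop_weight_monotone k k' w : k <= k' -> loop_weight k w <= loop_weight k' w.
Proof. by move=> hk; rewrite /loop_weight leq_mul2r ltnS hk orbT. Qed.

Lemma loop_weight_step k k' w : k < k' -> loop_weight k w + w + 1 < loop_weight k' w.
Proof. rewrite /loop_weight; nia. Qed.

Fixpoint cond_weight c : nat :=
  match c with
  | CFalse | CBool _ => 2
  | CNot c => cond_weight c + 2
  | COr c1 c2 => cond_weight c1 + cond_weight c2 + 1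
  | CEx _ c => loop_weight M (cond_weight c) + 1
  end.

Lemma cond_weight_gt0 c : 0 < cond_weight c.
Proof. by case: c => //= *; lia. Qed.

Definition cframe_weight (x : cframe Sg) : nat :=
  match x with
  | CEval _ _ c | CDown _ _ c => cond_weight c
  | CRes _ | CNotF => 1
  | CExF H _ _ _ c => loop_weight (size H) (cond_weight c)
  end.

Definition cstack_weight (S : seq (cframe Sg)) : nat := sumn (map cframe_weight S).

Lemma cstack_weight_cat S1 S2 :
  cstack_weight (S1 ++ S2) = cstack_weight S1 + cstack_weight S2.
Proof. by rewrite /cstack_weight map_cat sumn_cat. Qed.

Lemma clocal_weight F X Y : clocal F X Y -> size F <= M ->
  all cframe_terminating X -> cstack_weight Y < cstack_weight X.
Proof.
rewrite /cstack_weight.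
case=> /= [vs s|vs s B|vs s c|b|vs s c1 c2|vs s c|vs s c|vs s P c|
           H H'' vs s P c b _ /perm_size hH|H vs s P c|H vs s P c|H vs s P c _] hF;
  rewrite /loop_weight => hterm; try have := cond_weight_gt0 c; try nia.
move: hH hterm; rewrite /terminating /nilp /inst !(size_cat, size_map) andbT; nia.
Qed.

Lemma cstep_weight F S1 S2 : cstep F S1 S2 -> size F <= M ->
  all cframe_terminating S1 -> cstack_weight S2 < cstack_weight S1.
Proof.
case=> S [X [Y [hXY [-> ->]]]] hF; rewrite all_cat !cstack_weight_cat => /andP[_ hX].
by have := clocal_weight hXY hF hX; lia.
Qed.

Fixpoint query_weight R : nat :=
  match R with
  | QEmpty => 1
  | QOk | QFact _ => 2
  | QPlus R1 R2 => query_weight R1 + query_weight R2 + 3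
  | QImp c R => cond_weight c + query_weight R + 2
  | QFrom _ R => loop_weight M (query_weight R) + 1
  end.

(* The boolean records that the frames above are bound to leave an [Ok]: a
   tentative frame below them is then discarded by [DL_tentok] and never
   restores its deleted facts, so it is charged without them. *)
Definition dframe_potential (x : dframe Sg) (v : nat * bool) : nat * bool :=
  match x with
  | DOk => (v.1.+1, true)
  | DEval _ _ R => (query_weight R + v.1, success_assured R)
  | DDown _ _ R => (query_weight R + 2 + v.1, v.2 || success_assured R)
  | DCond _ _ Sc R => (cstack_weight Sc + query_weight R + 1 + v.1, false)
  | DIter H _ _ B _ R => (loop_weight (size H) (query_weight R) + v.1, B)
  | DTent H _ _ B F0 _ R =>
      if v.2 then (loop_weight (size H) (query_weight R) + 1 + v.1, true)
      else (loop_weight (size H + size F0) (query_weight R) + 1 + v.1, B)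
  end.

Definition dstack_potential (S : seq (dframe Sg)) : nat * bool :=
  foldr dframe_potential (0, false) S.

Definition state_potential (st : dstate Sg) : nat :=
  if st is DState _ _ _ St then (dstack_potential St).1.+1 else 0.

Definition potential_lt (a b : nat * bool) : Prop := a.1 < b.1 /\ (b.2 -> a.2).

Lemma dframe_potential_monotone x a b : potential_lt a b ->
  potential_lt (dframe_potential x a) (dframe_potential x b).
Proof.
case: a b => [n a] [m b] [/= hnm hab].
rewrite /potential_lt.
case: x => /= [|vs s R|vs s R|vs s Sc R|H vs s B P R|H vs s B F0 P R];
  try by split=> //; lia.
have := loop_weight_monotone (query_weight R) (leq_addr (size F0) (size H)).
by case: b hab => [-> //|_]; case: a => /= hw; split=> //; lia.
Qed.

Lemma dstack_potential_catl S X Y :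
  potential_lt (dstack_potential Y) (dstack_potential X) ->
  potential_lt (dstack_potential (S ++ Y)) (dstack_potential (S ++ X)).
Proof.
rewrite /dstack_potential !foldr_cat.
by elim: S => //= x S IH /IH; exact: dframe_potential_monotone.
Qed.

Lemma dlocal_potential Q F X Y : dml_query Q -> dlocal F X Y -> size F <= M ->
  foldr (fun x acc => dframe_ok Q x /\ acc) True X ->
  potential_lt (dstack_potential Y) (dstack_potential X).
Proof.
move=> hQ hXY hF; rewrite /potential_lt.
case: hXY => /= [|||||||||vs s S1 S2 R hS|vs s P R|H vs s B F0 P R|H vs s B P R _];
  rewrite /loop_weight; try by rewrite /cstack_weight /=; split=> //; nia.
- move=> [[_ hok] _]; have := cstep_weight hS hF (cframes_ok_terminating hQ hok).
  by split=> //; lia.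
- by case: B => /=; split=> //; nia.
Qed.

(* A match removes [pret P ++ pdel P] from the iterator's copy [H]; this is
   non-empty, and when [R] is not success assured [P] is terminating, so [H]
   shrinks even after the deleted facts [F0] are restored. *)
Lemma iter_match_potential H Hk F0 vs vs' s s' B P R :
  terminating P \/ (semi_terminating P /\ success_assured R) ->
  size F0 = size (pdel P) -> size H = size Hk + size (pret P) + size F0 ->
  potential_lt (dstack_potential [:: DTent Hk vs s B F0 P R; DEval vs' s' R])
               (dstack_potential [:: DIter H vs s B P R]).
Proof.
rewrite /terminating /semi_terminating /nilp size_cat /potential_lt /= => hP hF0 hH.
case: (success_assured R) hP => /= hP; split=> //.
- by have := @loop_weight_step (size Hk) (size H) (query_weight R); lia.
- by have := @loop_weight_step (size Hk + size F0) (size H) (query_weight R); lia.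
Qed.

Lemma dstep_potential Q st st' : dml_query Q -> valid_dstate Q st ->
  mass st <= M -> dstep st st' -> state_potential st' < state_potential st.
Proof.
move=> hQ + + hst; case: hst => /= [F F' Fs S X Y hXY|F F' Fs S vs s f|
  F F' Fs S H vs s B P R b G H' K L _ _ hH _ _|F F' Fs S H vs s B F0 P R|F F' Fs|F F' Fs]
  //= hvalid hmass; rewrite ltnS; apply: proj1; apply: dstack_potential_catl => //.
- apply: dlocal_potential hXY _ (foldr_and_catr hvalid) => //.
  by apply: leq_trans hmass; exact: leq_addr.
- have [hok _] := foldr_and_catr hvalid.
  apply: iter_match_potential (subq_From_wf hQ hok) _ _; first exact: size_map.
  by rewrite (perm_size hH) /inst !(size_cat, size_map); lia.
- by rewrite /potential_lt /= size_cat; split=> //; lia.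
Qed.

End Potential.
End Termination.

Theorem theorem6 (Sg : DMLsig) (Q : query Sg) :
  dml_query Q ->
  ~ (exists f : nat -> dstate Sg,
        (forall n, valid_dstate Q (f n)) /\ (forall n, dstep (f n) (f n.+1))).
Proof.
move=> hQ [f [valid step]].
pose M := mass (f 0).
have descent n : mass (f n) <= M /\ state_potential M (f n) + n <= state_potential M (f 0).
  elim: n => [|n [hmass hpot]]; first by rewrite addn0.
  have := dstep_mass (step n); have := dstep_potential hQ (valid n) hmass (step n).
  by split; lia.
by have [_] := descent (state_potential M (f 0)).+1; lia.
Qed.
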